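(* Let $\beta>1$ and $l\in(-1,0]$, put $r=l+1$, and let $T$ be the $(-\beta,l)$-transformation of $[l,r)$. Let $\mathrm{Fin}(-\beta,l)$ be the set of $x\in[l,r)$ whose $(-\beta,l)$-expansion $d(x)$ ends in $0^\omega$ (equivalently, $T^n(x)=0$ for some $n\in\mathbb{N}$). Then $\mathrm{Fin}(-\beta,l)\neq\{0\}$ if and only if $-\frac{1}{\beta}\in[l,r)$ or $\frac{1}{\beta}\in[l,r)$.
   Context: For $\beta>1$ and $l\in(-1,0]$, $r=l+1$, the $(-\beta,l)$-transformation is $T:[l,r)\to[l,r)$, $T(x)=-\beta x-\lfloor -\beta x-l\rfloor$. The $(-\beta,l)$-expansion of $x\in[l,r)$ is the integer sequence $d(x)=x_1x_2x_3\cdots$ with $x_i=\lfloor -\beta T^{i-1}(x)-l\rfloor$ for $i\ge1$; one has $x=\sum_{i\ge1}x_i(-\beta)^{-i}$. *)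

From Stdlib Require Import Reals ZArith.
Open Scope R_scope.

(* floor of a real number: Int_part x = up x - 1, and Stdlib's [up x] is the
   unique integer with x < up x <= x + 1, so Int_part x = floor x. *)
Definition floorR (x : R) : Z := Int_part x.

Definition negbeta_T (beta l : R) (x : R) : R :=
  - beta * x - IZR (floorR (- beta * x - l)).

Fixpoint negbeta_Titer (beta l : R) (n : nat) (x : R) : R :=
  match n with
  | O => x
  | S k => negbeta_T beta l (negbeta_Titer beta l k x)
  end.

(* the (-beta,l)-expansion d(x) = x_1 x_2 ...; here [negbeta_digit beta l x i]
   is x_{i+1} = floor(-beta T^i(x) - l)  (0-based indexing). *)
Definition negbeta_digit (beta l x : R) (i : nat) : Z :=
  floorR (- beta * negbeta_Titer beta l i x - l).

Definition negbeta_Fin (beta l : R) (x : R) : Prop :=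
  l <= x < l + 1 /\
  exists N : nat, forall i : nat, (N <= i)%nat -> negbeta_digit beta l x i = 0%Z.

(** A point of [Fin(-beta,l)] is one whose orbit hits [0]: once the digits
    vanish, [T] acts as multiplication by [-beta], which expands, so the
    bounded orbit must already sit at [0].  Going back one step from [0], the
    preimages of [0] under [T] are the points [-k/beta] with [k] an integer,
    and a nonzero one lies in [[l, l+1)] exactly when [1/beta] (for [k < 0])
    or [-1/beta] (for [k > 0]) does; conversely both of these are mapped to
    [0] by [T]. *)

From Stdlib Require Import Reals ZArith Lra Lia Classical.
Open Scope R_scope.

Lemma floorR_eq (z : R) (k : Z) : IZR k <= z < IZR k + 1 -> floorR z = k.
Proof.
  intros [Hlo Hhi]; unfold floorR, Int_part.
  assert (Hup : up z = (k + 1)%Z) by (symmetry; apply tech_up; rewrite plus_IZR; lra).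
  rewrite Hup; lia.
Qed.

Lemma pow_scale_bounded_eq0 (c a B : R) :
  1 < Rabs c -> (forall k, Rabs (c ^ k * a) <= B) -> a = 0.
Proof.
  intros Hc Hbound.
  destruct (Req_dec a 0) as [Ha0 | Ha0]; [exact Ha0 | exfalso].
  assert (Ha : 0 < Rabs a) by (apply Rabs_pos_lt; exact Ha0).
  destruct (Pow_x_infinity _ (Rlt_gt _ _ Hc) ((B + 1) / Rabs a)) as [M HM].
  specialize (HM M (le_n M)); specialize (Hbound M).
  rewrite Rabs_mult in Hbound.
  assert (Hgrow : (B + 1) / Rabs a * Rabs a <= Rabs (c ^ M) * Rabs a)
    by (apply Rmult_le_compat_r; lra).
  replace ((B + 1) / Rabs a * Rabs a) with (B + 1) in Hgrow by (field; lra).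
  lra.
Qed.

Section NegBetaTransformation.

Variables beta l : R.
Hypothesis hbeta : 1 < beta.
Hypothesis hl : -1 < l <= 0.

Local Notation T := (negbeta_T beta l).
Local Notation Titer := (negbeta_Titer beta l).

Lemma negbeta_T_range (y : R) : l <= T y < l + 1.
Proof.
  unfold negbeta_T, floorR.
  destruct (base_Int_part (- beta * y - l)); lra.
Qed.

Lemma negbeta_Titer_range (x : R) (n : nat) :
  l <= x < l + 1 -> l <= Titer n x < l + 1.
Proof. intros Hx; destruct n; [exact Hx | apply negbeta_T_range]. Qed.

Lemma floorR_opp_l : floorR (- beta * 0 - l) = 0%Z.
Proof. apply floorR_eq; simpl; lra. Qed.

Lemma negbeta_T_0 : T 0 = 0.
Proof. unfold negbeta_T; rewrite floorR_opp_l; simpl; lra. Qed.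

Lemma negbeta_Titer_add (m n : nat) (x : R) : Titer (m + n) x = Titer n (Titer m x).
Proof.
  induction n as [|n IH]; simpl; [now rewrite Nat.add_0_r | now rewrite Nat.add_succ_r, <- IH].
Qed.

Lemma negbeta_Titer_0 (n : nat) (y : R) : y = 0 -> Titer n y = 0.
Proof.
  intros ->; induction n as [|n IH]; simpl; [reflexivity | now rewrite IH, negbeta_T_0].
Qed.

Lemma negbeta_Titer_zero_digits (N k : nat) (x : R) :
  (forall i, (N <= i)%nat -> negbeta_digit beta l x i = 0%Z) ->
  Titer (N + k) x = (- beta) ^ k * Titer N x.
Proof.
  intros Hdig; induction k as [|k IH].
  - rewrite Nat.add_0_r; simpl; ring.
  - rewrite Nat.add_succ_r; simpl; unfold negbeta_T.
    pose proof (Hdig (N + k)%nat ltac:(lia)) as Hd; unfold negbeta_digit in Hd.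
    rewrite Hd, IH; simpl; ring.
Qed.

Lemma negbeta_Fin_iff_Titer_0 (x : R) :
  l <= x < l + 1 -> negbeta_Fin beta l x <-> exists n, Titer n x = 0.
Proof.
  intros Hx; split.
  - intros [_ [N Hdig]]; exists N.
    apply (pow_scale_bounded_eq0 (- beta) _ 1); [rewrite Rabs_left; lra |].
    intros k; rewrite <- (negbeta_Titer_zero_digits N k x Hdig).
    pose proof (negbeta_Titer_range x (N + k) Hx).
    apply Rabs_le; lra.
  - intros [n Hn]; split; [exact Hx |]; exists n; intros i Hi.
    unfold negbeta_digit.
    replace i with (n + (i - n))%nat by lia.
    rewrite negbeta_Titer_add, (negbeta_Titer_0 _ _ Hn).
    exact floorR_opp_l.
Qed.

Lemma negbeta_T_eq0_preimage (y : R) :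
  l <= y < l + 1 -> T y = 0 ->
  y = 0 \/ (l <= - (1 / beta) < l + 1) \/ (l <= 1 / beta < l + 1).
Proof.
  intros Hy HT; unfold negbeta_T in HT.
  set (k := floorR (- beta * y - l)) in *.
  assert (Hyk : y = - IZR k / beta)
    by (replace (- IZR k) with (beta * y) by lra; field; lra).
  assert (Hinv : 0 < / beta) by (apply Rinv_0_lt_compat; lra).
  unfold Rdiv in *; rewrite Hyk in Hy.
  destruct (Z.lt_trichotomy k 0) as [Kneg | [K0 | Kpos]].
  - right; right.
    assert (Hk : - IZR k >= 1) by (assert (Kle : (k <= -1)%Z) by lia; apply IZR_le in Kle; lra).
    assert (1 * / beta <= - IZR k * / beta) by (apply Rmult_le_compat_r; lra).
    lra.
  - left; rewrite Hyk, K0; simpl; lra.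
  - right; left.
    assert (Hk : IZR k >= 1) by (assert (Kge : (1 <= k)%Z) by lia; apply IZR_le in Kge; lra).
    assert (1 * / beta <= IZR k * / beta) by (apply Rmult_le_compat_r; lra).
    lra.
Qed.

Lemma negbeta_Titer_eq0_start (x : R) (n : nat) :
  l <= x < l + 1 -> Titer n x = 0 ->
  x = 0 \/ (l <= - (1 / beta) < l + 1) \/ (l <= 1 / beta < l + 1).
Proof.
  intros Hx; induction n as [|n IH]; simpl; intros Hn; [now left |].
  destruct (negbeta_T_eq0_preimage _ (negbeta_Titer_range x n Hx) Hn) as [H0 | Hcond].
  - exact (IH H0).
  - now right.
Qed.

Lemma negbeta_T_inv_beta : T (1 / beta) = 0.
Proof.
  unfold negbeta_T.
  replace (- beta * (1 / beta)) with (-1) by (field; lra).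
  rewrite (floorR_eq _ (-1)); simpl; lra.
Qed.

Lemma negbeta_T_opp_inv_beta : T (- (1 / beta)) = 0.
Proof.
  unfold negbeta_T.
  replace (- beta * - (1 / beta)) with 1 by (field; lra).
  rewrite (floorR_eq _ 1); simpl; lra.
Qed.

End NegBetaTransformation.

Theorem mainTheorem1 (beta l : R) (hbeta : 1 < beta) (hl : -1 < l <= 0) :
  ~ (forall x : R, negbeta_Fin beta l x <-> x = 0) <->
  ((l <= - (1 / beta) < l + 1) \/ (l <= 1 / beta < l + 1)).
Proof.
  assert (Hinv : 0 < 1 / beta) by (apply Rdiv_lt_0_compat; lra).
  split.
  - intros HFin; apply NNPP; intros Hcond; apply HFin; intros x; split.
    + intros Hx; pose proof (proj1 Hx) as Hrange.
      destruct (proj1 (negbeta_Fin_iff_Titer_0 beta l hbeta hl x Hrange) Hx) as [n Hn].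
      destruct (negbeta_Titer_eq0_start beta l hbeta hl x n Hrange Hn); tauto.
    + intros ->; apply negbeta_Fin_iff_Titer_0; [assumption | assumption | lra |].
      now exists 0%nat.
  - intros Hcond HFin.
    assert (Hnonzero : forall x, l <= x < l + 1 -> negbeta_T beta l x = 0 -> x = 0).
    { intros x Hx HT; apply HFin, negbeta_Fin_iff_Titer_0; try assumption.
      now exists 1%nat. }
    destruct Hcond as [Hrange | Hrange].
    + pose proof (Hnonzero _ Hrange (negbeta_T_opp_inv_beta beta l hbeta hl)); lra.
    + pose proof (Hnonzero _ Hrange (negbeta_T_inv_beta beta l hbeta hl)); lra.
Qed.
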